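(* Let $Q$ be a finite simply connected latin quandle and $\alpha$ a congruence of $Q$. Then $Q/\alpha$ is simply connected.
   Context: A quandle is a set $Q$ with a binary operation $*$ such that every left translation $L_x:y\mapsto x*y$ is bijective, $x*(y*z)=(x*y)*(x*z)$ and $x*x=x$; left division is $x\backslash y=L_x^{-1}(y)$. $Q$ is latin if every right translation $y\mapsto y*x$ is bijective, and connected if $\langle L_x:x\in Q\rangle$ is transitive. A congruence is an equivalence relation compatible with $*$ and $\backslash$; $Q/\alpha$ is the quotient quandle. For a set $S$, a quandle cocycle with values in $\mathrm{Sym}_S$ is $\theta:Q\times Q\to\mathrm{Sym}_S$ with $\theta_{x*y,x*z}\theta_{x,z}=\theta_{x,y*z}\theta_{y,z}$ and $\theta_{x,x}=1$; it is cohomologous to the trivial cocycle if there is $\gamma:Q\to\mathrm{Sym}_S$ with $\theta_{x,y}=\gamma_{x*y}\gamma_y^{-1}$ for all $x,y$. $Q$ is simply connected if it is connected and, for every set $S$, every such cocycle is cohomologous to the trivial cocycle. *)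

From mathcomp Require Import all_boot.
Set Implicit Arguments. Unset Strict Implicit. Unset Printing Implicit Defensive.

Section Quandles.
Variable T : Type.
Variable op : T -> T -> T.   (* op x y = x * y, left translation L_x = op x *)

Definition is_quandle : Prop :=
  [/\ (forall x, bijective (op x)),
      (forall x y z, op x (op y z) = op (op x y) (op x z)) &
      (forall x, op x x = x)].

Definition is_latin : Prop := forall x, bijective (fun y => op y x).

(* b lies in the orbit of a under the group generated by the L_x
   (closed under L_x and under L_x^{-1}) *)
Inductive lreach (a : T) : T -> Prop :=
  | lr_refl : lreach a a
  | lr_L x b : lreach a b -> lreach a (op x b)
  | lr_Linv x b : lreach a (op x b) -> lreach a b.

Definition is_connected : Prop := forall a b, lreach a b.

(* quandle cocycle with values in Sym_S; composition right-to-left *)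
Definition is_cocycle (S : Type) (theta : T -> T -> S -> S) : Prop :=
  [/\ (forall x y, bijective (theta x y)),
      (forall x y z s,
          theta (op x y) (op x z) (theta x z s) = theta x (op y z) (theta y z s)) &
      (forall x s, theta x x s = s)].

(* theta_{x,y} = gamma_{x*y} gamma_y^{-1}, i.e. theta_{x,y} gamma_y = gamma_{x*y} *)
Definition cohomologous_trivial (S : Type) (theta : T -> T -> S -> S) : Prop :=
  exists gamma : T -> S -> S,
    (forall x, bijective (gamma x)) /\
    (forall x y s, theta x y (gamma y s) = gamma (op x y) s).

Definition simply_connected : Prop :=
  is_connected /\
  forall (S : Type) (theta : T -> T -> S -> S),
    is_cocycle theta -> cohomologous_trivial theta.

End Quandles.

Section Congruence.
Variable Q : finType.
Variable op : Q -> Q -> Q.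

(* congruence: equivalence relation compatible with * and with left division
   (compatibility with \ written via y = x \ (x*y)) *)
Definition is_congruence (a : rel Q) : Prop :=
  [/\ (forall x, a x x), (forall x y, a x y -> a y x),
      (forall x y z, a x y -> a y z -> a x z),
      (forall x x' y y', a x x' -> a y y' -> a (op x y) (op x' y')) &
      (forall x x' y y', a x x' -> a (op x y) (op x' y') -> a y y')].

(* quotient Q/a: carrier = canonical representatives of the classes *)
Definition qcanon (a : rel Q) (x : Q) : Q := odflt x [pick y | a x y].

Definition qcarrier (a : rel Q) := {x : Q | qcanon a x == x}.

Definition qop (a : rel Q) (u v : qcarrier a) : qcarrier a :=
  insubd u (qcanon a (op (val u) (val v))).

End Congruence.
Arguments qop [Q] op a u v.

(* The projection Q -> Q/a is a surjective quandle morphism, so connectedness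
   passes to the quotient and every cocycle on Q/a pulls back to a cocycle on
   Q, which is a coboundary of some gamma since Q is simply connected.  The
   pulled-back cocycle is trivial on pairs of congruent elements, so
   gamma (x * y) = gamma y whenever x ~ y.  In a finite latin quandle the
   injective right translation by y maps the class of y into itself, hence
   onto it: every z ~ y is some w * y with w ~ y.  So gamma is constant on
   classes and descends to a trivialisation of the cocycle on Q/a. *)
From mathcomp Require Import all_boot.
Set Implicit Arguments. Unset Strict Implicit.

Section Morphism.
Variables (T T' : Type) (op : T -> T -> T) (op' : T' -> T' -> T').
Variable f : T -> T'.
Hypothesis fM : forall x y, f (op x y) = op' (f x) (f y).

Lemma lreach_morph a b : lreach op a b -> lreach op' (f a) (f b).
Proof.
elim=> [|x c _ IH|x c _ IH]; first exact: lr_refl.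
- by rewrite fM; apply: lr_L.
- by apply: (lr_Linv (x := f x)); rewrite -fM.
Qed.

Lemma connected_morph (g : T' -> T) :
  cancel g f -> is_connected op -> is_connected op'.
Proof. by move=> gK conn u v; rewrite -(gK u) -(gK v); apply: lreach_morph. Qed.

Lemma cocycle_morph (S : Type) (theta : T' -> T' -> S -> S) :
  is_cocycle op' theta -> is_cocycle op (fun x y => theta (f x) (f y)).
Proof.
case=> th_bij th_eq th_id; split=> [x y|x y z s|x s]; first exact: th_bij.
- by rewrite !fM th_eq.
- exact: th_id.
Qed.

End Morphism.

Section Quotient.
Variables (Q : finType) (op : Q -> Q -> Q) (a : rel Q).
Hypothesis a_congr : is_congruence op a.

Lemma qcanon_rel x : a x (qcanon a x).
Proof.
case: a_congr => a_refl _ _ _ _; rewrite /qcanon.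
by case: pickP => [y /= -> //|/(_ x)]; rewrite a_refl.
Qed.

Lemma qcanon_eq x y : a x y -> qcanon a x = qcanon a y.
Proof.
case: a_congr => a_refl a_sym a_trans _ _ axy; rewrite /qcanon.
have same_class : a x =1 a y.
  by move=> z; apply/idP/idP; [apply: a_trans (a_sym _ _ axy) | apply: a_trans].
rewrite (eq_pick same_class).
by case: pickP => [//|/(_ y)]; rewrite a_refl.
Qed.

Lemma qcanon_idem x : qcanon a (qcanon a x) = qcanon a x.
Proof. by rewrite -(qcanon_eq (qcanon_rel x)). Qed.

Definition qpi (x : Q) : qcarrier a := exist _ (qcanon a x) (introT eqP (qcanon_idem x)).

Lemma qpiK : cancel val qpi.
Proof. by case=> x x_canon; apply: val_inj; apply/eqP. Qed.

Lemma qpi_eq x y : a x y -> qpi x = qpi y.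
Proof. by move=> axy; apply: val_inj; apply: qcanon_eq. Qed.

Lemma val_qop u v : val (qop op a u v) = qcanon a (op (val u) (val v)).
Proof. by rewrite val_insubd qcanon_idem eqxx. Qed.

Lemma qpi_morph x y : qpi (op x y) = qop op a (qpi x) (qpi y).
Proof.
case: a_congr => _ _ _ a_op _.
by apply: val_inj; rewrite val_qop; apply: qcanon_eq; apply: a_op; apply: qcanon_rel.
Qed.

End Quotient.

Section LatinClasses.
Variables (Q : finType) (op : Q -> Q -> Q) (a : rel Q).
Hypothesis op_idem : forall x, op x x = x.
Hypothesis op_latin : is_latin op.
Hypothesis a_congr : is_congruence op a.

Lemma congr_class_right_mul y z : a y z -> exists2 w, a y w & op w y = z.
Proof.
case: a_congr => a_refl _ _ a_op _ ayz.
pose C := [set w | a y w].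
have mul_inj : injective (fun w => op w y).
  by case: (op_latin y) => g gK _; apply: can_inj gK.
have mul_C : [set op w y | w in C] \subset C.
  apply/subsetP=> t /imsetP[w]; rewrite !inE => ayw ->.
  by rewrite -{1}(op_idem y) a_op.
have mul_C_onto : [set op w y | w in C] = C.
  by apply/eqP; rewrite eqEcard mul_C (card_imset _ mul_inj) leqnn.
have : z \in C by rewrite inE.
by rewrite -mul_C_onto => /imsetP[w]; rewrite inE => ayw ->; exists w.
Qed.

Lemma class_invariant (S : Type) (gamma : Q -> S -> S) :
  (forall x y, a y x -> gamma (op x y) =1 gamma y) ->
  forall y z, a y z -> gamma z =1 gamma y.
Proof. by move=> gamma_op y z /congr_class_right_mul[w ayw <-]; apply: gamma_op. Qed.

End LatinClasses.

Theorem proposition3p7 (Q : finType) (op : Q -> Q -> Q) (a : rel Q) :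
  is_quandle op -> is_latin op -> simply_connected op ->
  is_congruence op a ->
  simply_connected (qop op a).
Proof.
move=> [_ _ op_idem] op_latin [conn cocycles_trivial] a_congr.
have [_ a_sym _ _ _] := a_congr.
split; first exact: (connected_morph (qpi_morph a_congr) (qpiK a_congr) conn).
move=> S theta theta_cocycle.
have [gamma [gamma_bij gamma_cobound]] :=
  cocycles_trivial _ _ (cocycle_morph (qpi_morph a_congr) theta_cocycle).
have gamma_class : forall y z, a y z -> gamma z =1 gamma y.
  apply: (class_invariant op_idem op_latin a_congr) => x y ayx s.
  have [_ _ theta_id] := theta_cocycle.
  by rewrite -gamma_cobound (qpi_eq a_congr (a_sym _ _ ayx)) theta_id.
exists (fun u => gamma (val u)); split=> [u|u v s]; first exact: gamma_bij.
have := gamma_cobound (val u) (val v) s; rewrite !(qpiK a_congr) => ->.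
by rewrite (val_qop a_congr) (gamma_class _ _ (qcanon_rel a_congr _)).
Qed.
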